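(* Let $k\geq 4$. For every $0\leq \gamma< 1/2$, every $n$-node graph with maximum degree at most $\sqrt{n}$ that has at least $n^{k/2+\gamma}$ $k$-cycles must contain at least $\frac{1}{2}n^{k/2-1+\gamma}$ simple $\gamma$-dense $(k-2)$-paths.
   Context: In an $n$-node graph, a $(k-2)$-path is a path $u,u_1,\ldots,u_{k-4},w$ on $k-2$ nodes (counting both endpoints); it is simple if its nodes are distinct. A simple $(k-2)$-path is $\gamma$-dense if the number of $k$-cycles (simple cycles on $k$ vertices) that contain it as a subpath is at least $n^{1/2+\gamma}/2$. *)

From HB Require Import structures.
From mathcomp Require Import all_boot all_order all_algebra.
From mathcomp Require Import reals exp.
Set Implicit Arguments. Unset Strict Implicit. Unset Printing Implicit Defensive.
Import Order.TTheory GRing.Theory Num.Theory.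

Section Graphs.
Variables (T : finType) (e : rel T).

Definition simple_graph := symmetric e /\ irreflexive e.

Definition nbhd (v : T) : {set T} := [set u | e v u].

Definition cycle_seq (k : nat) (s : seq T) : bool :=
  [&& size s == k, uniq s & cycle e s].

Definition cedges (s : seq T) : {set {set T}} :=
  [set [set x.1; x.2] | x in zip s (rot 1 s)].

(* the k-cycles of the graph, as subgraphs (given by their edge sets) *)
Definition kcycles (k : nat) : {set {set {set T}}} :=
  [set C | [exists s : k.-tuple T, cycle_seq k s && (cedges s == C)]].

Definition simple_path (p : seq T) : bool :=
  uniq p && (if p is x :: q then path e x q else true).

Definition cycles_through (k : nat) (p : seq T) : {set {set {set T}}} :=
  [set C | [exists s : k.-tuple T,
     [&& cycle_seq k s, cedges s == C & take (k - 2) s == p]]].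

Definition gamma_dense (R : realType) (gamma : R) (k : nat) (p : seq T) : bool :=
  simple_path p &&
  ((#|T|%:R `^ (2^-1 + gamma)) / 2 <= (#|cycles_through k p|%:R : R))%R.

End Graphs.

From HB Require Import structures.
From mathcomp Require Import all_boot all_order all_algebra.
From mathcomp Require Import reals exp.
From mathcomp Require Import zify ring lra.
Import Order.TTheory GRing.Theory Num.Theory.
Set Implicit Arguments. Unset Strict Implicit. Unset Printing Implicit Defensive.
Local Open Scope ring_scope.

(* Every k-cycle has a traversal whose first k-2 vertices form a simple
   (k-2)-path p, so #cycles <= sum_p c(p), where c(p) counts the k-cycles
   through p.  Such a cycle is determined by p and its two remaining vertices,
   which are neighbours of the endpoints of p; hence c(p) <= D^2 <= n for the
   maximum degree D <= sqrt n.  Non-dense paths have c(p) < n^(1/2+g)/2 by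
   definition, so  #cycles <= n #dense + (n^(1/2+g)/2) #simple.  Counting walks
   vertex by vertex gives #simple <= n D^(k-3) <= n^((k-1)/2), so the second term
   is at most n^(k/2+g)/2 <= #cycles/2, and the first must supply the rest. *)

Lemma card_bigcup_leq (I T : finType) (P : pred I) (A : I -> {set T}) :
  (#|\bigcup_(i | P i) A i| <= \sum_(i | P i) #|A i|)%N.
Proof.
elim/big_rec2: _ => [|i m X _ leXm]; first by rewrite cards0.
by apply: leq_trans (leq_card_setU _ _).1 _; rewrite leq_add2l.
Qed.

Lemma sumr_indicator (R : numDomainType) (X : finType) (A : {set X}) :
  \sum_(x : X) ((x \in A)%:R : R) = #|A|%:R.
Proof. by rewrite -natr_sum -sum1_card [in RHS]big_mkcond. Qed.

Lemma sumr_le_indicators (R : numDomainType) (X : finType) (F : X -> R)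
    (A B : {set X}) (a b : R) :
  (forall x, F x <= a * (x \in A)%:R + b * (x \in B)%:R) ->
  \sum_(x : X) F x <= a * #|A|%:R + b * #|B|%:R.
Proof.
move=> leF; apply: le_trans (ler_sum _ (fun x _ => leF x)) _.
by rewrite big_split /= -!mulr_sumr !sumr_indicator.
Qed.

Lemma powR_mul_sqrt (R : realType) (x a : R) (m : nat) : 0 < x ->
  x `^ a * Num.sqrt x ^+ m = x `^ (a + m%:R / 2).
Proof.
move=> x_gt0; have x_ge0 := ltW x_gt0.
rewrite -powR12_sqrt // -powR_mulrn ?powR_ge0 // -powRrM (mulrC 2^-1).
by rewrite powRD // (gt_eqF x_gt0) implybT.
Qed.

Lemma le_dense_of_counts (R : realType) (k : nat) (gamma n d D S : R) :
  (3 <= k)%N -> 0 < n -> 0 <= d <= Num.sqrt n -> 0 <= D ->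
  S <= n * d ^+ (k - 3) ->
  n `^ (k%:R / 2 + gamma) <= d ^+ 2 * D + n `^ (2^-1 + gamma) / 2 * S ->
  2^-1 * n `^ (k%:R / 2 - 1 + gamma) <= D.
Proof.
move=> k_ge3 n_gt0 /andP[d_ge0 d_le] D_ge0 S_le counts_ge.
have d_sqr_le : d ^+ 2 <= n.
  by rewrite -[leRHS](sqr_sqrtr (ltW n_gt0)) lerXn2r // nnegrE ?sqrtr_ge0.
set X := n `^ (k%:R / 2 - 1 + gamma) in counts_ge *.
have powE : n `^ (k%:R / 2 + gamma) = X * n.
  rewrite -[in RHS](powRr1 (ltW n_gt0)) -powRD ?(gt_eqF n_gt0) ?implybT //.
  by congr (_ `^ _); lra.
have S_term_le : n `^ (2^-1 + gamma) / 2 * S <= X * n / 2.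
  have <- : n `^ (2^-1 + gamma) * Num.sqrt n ^+ (k - 3) = X.
    by rewrite powR_mul_sqrt // natrB //; congr (_ `^ _); lra.
  have -> : n `^ (2^-1 + gamma) * Num.sqrt n ^+ (k - 3) * n / 2
      = n `^ (2^-1 + gamma) / 2 * (n * Num.sqrt n ^+ (k - 3)) by ring.
  rewrite ler_wpM2l ?divr_ge0 ?powR_ge0 //; apply: le_trans S_le _.
  rewrite ler_wpM2l ?(ltW n_gt0) //.
  by apply: lerXn2r; rewrite // nnegrE ?sqrtr_ge0.
rewrite powE in counts_ge; nra.
Qed.

Section MaxDegree.
Variables (T : finType) (e : rel T).

Definition max_degree : nat := \max_(v : T) #|nbhd e v|.

Lemma card_nbhd_le_max_degree v : (#|nbhd e v| <= max_degree)%N.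
Proof. exact: leq_bigmax. Qed.

Lemma max_degree_le (R : numDomainType) (b : R) :
  0 <= b -> (forall v, (#|nbhd e v|%:R : R) <= b) -> (max_degree%:R : R) <= b.
Proof.
move=> b_ge0 deg_le; apply: (big_ind (fun m : nat => (m%:R : R) <= b)) => //.
by move=> x y x_le y_le; rewrite /maxn; case: ltnP.
Qed.

End MaxDegree.

Section Walks.
Variables (T : finType) (e : rel T).

Definition walk (s : seq T) : bool := if s is x :: q then path e x q else true.

Definition walks m : {set m.-tuple T} := [set t : m.-tuple T | walk t].

Definition walks_from m (v : T) : {set m.+1.-tuple T} :=
  [set t : m.+1.-tuple T | (thead t == v) && walk t].

Variable d : nat.
Hypothesis max_deg : forall v, (#|nbhd e v| <= d)%N.

Lemma card_walks_from m v : (#|walks_from m v| <= d ^ m)%N.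
Proof.
elim: m v => [|m IHm] v.
  rewrite expn0; apply: leq_trans (_ : _ <= #|[set [tuple v]]|)%N _.
    apply: subset_leq_card; apply/subsetP.
    move=> t; rewrite !inE => /andP[/eqP<- _]; apply/eqP/val_inj.
    by case: t => [[|x []]].
  by rewrite cards1.
have tail_walks : (#|walks_from m.+1 v|
    <= #|[set t : m.+1.-tuple T | e v (thead t) && walk t]|)%N.
  rewrite -[#|walks_from _ _|](card_in_imset (f := @behead_tuple _ _)); last first.
    move=> t1 t2; rewrite !inE => /andP[/eqP v1 _] /andP[/eqP v2 _].
    move=> /(congr1 val) /= eq_tl; apply/val_inj.
    by rewrite (congr1 val (tuple_eta t1)) (congr1 val (tuple_eta t2)) /= v1 v2 eq_tl.
  apply: subset_leq_card; apply/subsetP => _ /imsetP[t + ->].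
  by rewrite !inE => /andP[/eqP<-]; case: t => [[|x [|y s]] //= _] /andP[-> ->].
apply: leq_trans tail_walks _; rewrite expnS.
apply: (@leq_trans (\sum_(u in nbhd e v) #|walks_from m u|)).
  apply: leq_trans (card_bigcup_leq _ _); apply: subset_leq_card.
  apply/subsetP => t; rewrite inE => /andP[evt wt].
  by apply/bigcupP; exists (thead t); rewrite !inE ?evt ?eqxx.
apply: leq_trans (_ : \sum_(u in nbhd e v) d ^ m <= _)%N.
  by apply: leq_sum => u _; apply: IHm.
by rewrite sum_nat_const leq_mul2r max_deg orbT.
Qed.

Lemma card_walks m : (0 < m)%N -> (#|walks m| <= #|T| * d ^ m.-1)%N.
Proof.
case: m => // m _; rewrite -sum_nat_const.
apply: (@leq_trans (\sum_(v : T) #|walks_from m v|)); last first.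
  by apply: leq_sum => v _; apply: card_walks_from.
apply: leq_trans (card_bigcup_leq _ _); apply: subset_leq_card.
apply/subsetP => t; rewrite inE => wt.
by apply/bigcupP; exists (thead t); rewrite // !inE eqxx.
Qed.

Lemma card_simple_paths_leq m : (0 < m)%N ->
  (#|[set p : m.-tuple T | simple_path e p]| <= #|T| * d ^ m.-1)%N.
Proof.
move=> m_gt0; apply: leq_trans (card_walks m_gt0); apply: subset_leq_card.
by apply/subsetP => p; rewrite !inE => /andP[].
Qed.

End Walks.

Section CyclesThroughPath.
Variables (T : finType) (e : rel T).
Hypothesis e_simple : simple_graph e.

Definition traversals_through k (p : seq T) : {set k.-tuple T} :=
  [set s : k.-tuple T | cycle_seq e k s && (take (k - 2) s == p)].

Lemma cycles_throughE k p :
  cycles_through e k p = [set cedges s | s : k.-tuple T in traversals_through k p].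
Proof.
apply/setP => C; rewrite inE; apply/existsP/imsetP.
  by move=> [s /and3P[cs /eqP<- ps]]; exists s; rewrite // inE cs ps.
by move=> [s]; rewrite inE => /andP[cs ps] ->; exists s; rewrite cs ps eqxx.
Qed.

Lemma card_traversals_through k p (x0 : T) : (3 <= k)%N ->
  (#|traversals_through k p|
     <= #|nbhd e (nth x0 p (k - 3))| * #|nbhd e (nth x0 p 0)|)%N.
Proof.
move=> k_ge3; have [e_sym _] := e_simple.
pose closing (s : k.-tuple T) := (nth x0 s (k - 2), nth x0 s (k - 1)).
rewrite -cardsX -(card_in_imset (f := closing)); last first.
  move=> s1 s2; rewrite !inE => /andP[_ /eqP p1] /andP[_ /eqP p2] [l1 l2].
  apply/val_inj/(@eq_from_nth _ x0) => [|i]; first by rewrite !size_tuple.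
  rewrite size_tuple => lt_ik; have [lt_i|ge_i] := ltnP i (k - 2).
    by rewrite -(nth_take _ lt_i) p1 -p2 nth_take.
  by have [->|->] : i = (k - 2)%N \/ i = (k - 1)%N by lia.
apply: subset_leq_card; apply/subsetP => _ /imsetP[s + ->].
rewrite !inE => /andP[/and3P[/eqP size_s _]]; rewrite (cycle_path x0).
move=> /(pathP x0) s_path /eqP <-; rewrite size_s in s_path.
rewrite !nth_take; try lia; apply/andP; split.
  rewrite /= (_ : k - 2 = (k - 3).+1)%N; last by lia.
  by apply: (s_path (k - 3).+1); lia.
rewrite /= e_sym (_ : k - 1 = (size s).-1)%N ?nth_last; last by lia.
by apply: (s_path 0); lia.
Qed.

Lemma card_cycles_through_leq k p d : (3 <= k)%N ->
  (forall v, #|nbhd e v| <= d)%N -> (#|cycles_through e k p| <= d ^ 2)%N.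
Proof.
move=> k_ge3 max_deg; rewrite cycles_throughE (leq_trans (leq_imset_card _ _)) //.
have [->|[s _]] := set_0Vmem (traversals_through k p); first by rewrite cards0.
have x0 := tnth s (Ordinal (leq_trans (isT : 0 < 3)%N k_ge3)).
by rewrite (leq_trans (card_traversals_through p x0 k_ge3)) // -mulnn leq_mul.
Qed.

Lemma simple_path_take_cycle k j (s : seq T) :
  cycle_seq e k s -> simple_path e (take j s).
Proof.
case/and3P=> _ uniq_s; rewrite /simple_path take_uniq //.
case: s uniq_s => [|x q] //= _; rewrite rcons_path => /andP[q_path _].
by case: j => //= j; apply: take_path.
Qed.

Lemma simple_path_cycles_through k p :
  (0 < #|cycles_through e k p|)%N -> simple_path e p.
Proof.
case/card_gt0P => C; rewrite inE => /existsP[s /and3P[cs _ /eqP<-]].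
exact: simple_path_take_cycle cs.
Qed.

Lemma card_kcycles_leq_sum k :
  (#|kcycles e k| <= \sum_(p : (k - 2).-tuple T) #|cycles_through e k p|)%N.
Proof.
apply: leq_trans (card_bigcup_leq _ _); apply: subset_leq_card.
apply/subsetP => C; rewrite inE => /existsP[s /andP[cs /eqP C_s]].
have size_p : size (take (k - 2) s) == (k - 2)%N.
  by rewrite size_takel // size_tuple leq_subr.
apply/bigcupP; exists (Tuple size_p) => //; rewrite inE.
by apply/existsP; exists s; rewrite cs C_s !eqxx.
Qed.

Lemma card_kcycles_le_dense_simple (R : realType) (gamma : R) k d :
  (3 <= k)%N -> (forall v, #|nbhd e v| <= d)%N ->
  (#|kcycles e k|%:R : R)
    <= (d ^ 2)%:R * #|[set p : (k - 2).-tuple T | gamma_dense e gamma k p]|%:R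
       + #|T|%:R `^ (2^-1 + gamma) / 2
         * #|[set p : (k - 2).-tuple T | simple_path e p]|%:R.
Proof.
move=> k_ge3 max_deg; have := card_kcycles_leq_sum k; rewrite -(ler_nat R) => le_sum.
apply: le_trans le_sum _; rewrite natr_sum.
apply: sumr_le_indicators => p; rewrite !inE.
have tau_ge0 : (0 : R) <= #|T|%:R `^ (2^-1 + gamma) / 2 by rewrite divr_ge0 ?powR_ge0.
have [dense_p|sparse_p] := boolP (gamma_dense e gamma k p).
  rewrite mulr1n mulr1; apply: le_trans (_ : _ <= (d ^ 2)%:R :> R) _.
    by rewrite ler_nat; apply: card_cycles_through_leq.
  by rewrite lerDl mulr_ge0.
rewrite mulr0n mulr0 add0r; have [simple_p|not_simple_p] := boolP (simple_path e p).
  by move: sparse_p; rewrite /gamma_dense simple_p mulr1n mulr1 -ltNge => /ltW.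
rewrite mulr0n mulr0 lern0 -leqn0 leqNgt; apply: contra not_simple_p.
exact: simple_path_cycles_through.
Qed.

End CyclesThroughPath.

Theorem lemma5p3 (R : realType) (T : finType) (e : rel T) (k : nat) (gamma : R) :
  simple_graph e ->
  (4 <= k)%N ->
  0 <= gamma -> gamma < 2^-1 ->
  (forall v : T, (#|nbhd e v|%:R : R) <= Num.sqrt (#|T|%:R)) ->
  (#|T|%:R `^ (k%:R / 2 + gamma) <= (#|kcycles e k|%:R : R)) ->
  2^-1 * #|T|%:R `^ (k%:R / 2 - 1 + gamma)
    <= (#|[set p : (k - 2).-tuple T | gamma_dense e gamma k p]|%:R : R).
Proof.
move=> e_simple k_ge4 gamma_ge0 _ deg_le cycles_ge.
have k_ge3 : (3 <= k)%N by lia.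
have [T_empty|T_nonempty] := posnP #|T|.
  have kR : (4 : R) <= k%:R by rewrite (ler_nat R 4).
  by rewrite T_empty powR0 ?mulr0 // gt_eqF //; lra.
have n_gt0 : (0 : R) < #|T|%:R by rewrite ltr0n.
have d_le := max_degree_le (sqrtr_ge0 #|T|%:R) deg_le.
apply: (le_dense_of_counts (d := (max_degree e)%:R)
  (S := #|[set p : (k - 2).-tuple T | simple_path e p]|%:R) k_ge3 n_gt0 _ (ler0n _ _)).
- by rewrite ler0n d_le.
- have k2_gt0 : (0 < k - 2)%N by lia.
  have := card_simple_paths_leq (card_nbhd_le_max_degree e) k2_gt0.
  by rewrite (_ : (k - 2).-1 = k - 3)%N -?(ler_nat R) ?natrM ?natrX //; lia.
- apply: le_trans cycles_ge _; rewrite -natrX.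
  exact: card_kcycles_le_dense_simple (card_nbhd_le_max_degree e).
Qed.
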